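(* Let $m\ge0$, $n\ge1$ and let $s_1,\dots,s_n\in\mathbb Z$ with $\sum_{i=1}^n s_i=0$. Then $y_{1^{m+1}0}^{s_1}y_{1^{m+2}0}^{s_2}\cdots y_{1^{m+n}0}^{s_n}\in S$.
   Context: Let $\{0,1\}^{\mathbb N}$ be the Cantor set of infinite binary sequences and $\{0,1\}^{<\mathbb N}$ the set of finite binary words, including the empty word; juxtaposition denotes concatenation, $0^n,1^n$ denote constant words. Homeomorphisms act on the right. Define $x,y$ by $00\eta\cdot x=0\eta$, $01\eta\cdot x=10\eta$, $1\eta\cdot x=11\eta$, and recursively $00\eta\cdot y=0(\eta\cdot y)$, $01\eta\cdot y=10(\eta\cdot y^{-1})$, $1\eta\cdot y=11(\eta\cdot y)$; $x_s$ (resp. $y_s$) sends $s\eta\mapsto s(\eta\cdot x)$ (resp. $s(\eta\cdot y)$) and fixes sequences not beginning with $s$. For $n\ge0$, $p_n$ is the homeomorphism with $1^k0\eta\cdot p_n=1^{k+1}0\eta$ for $0\le k\le n-1$, $1^n0\eta\cdot p_n=1^{n+1}\eta$, and $1^{n+1}\eta\cdot p_n=0\eta$. $T$ is the group generated by all $x_s$ and all $p_n$, and $S=\langle T,\ y_{10}y_{110}^{-1}\rangle$. *)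

From mathcomp Require Import all_boot all_order all_algebra.
Set Implicit Arguments. Unset Strict Implicit. Unset Printing Implicit Defensive.
Import GRing.Theory Num.Theory.

(* Points of the Cantor set {0,1}^N: infinite binary sequences (false = 0). *)
Definition cantor := nat -> bool.

Definition capp (w : seq bool) (f : cantor) : cantor :=
  fun i => if (i < size w)%N then nth false w i else f (i - size w)%N.

Definition cdrop (k : nat) (f : cantor) : cantor := fun i => f (i + k)%N.

Definition prefixb (w : seq bool) (f : cantor) : bool :=
  all (fun i => f i == nth false w i) (iota 0 (size w)).

(* Homeomorphisms act on the right: eta . (g h) = (eta . g) . h,
   i.e. as functions  rmul g h = h \o g. *)
Definition rmul (g h : cantor -> cantor) : cantor -> cantor := fun e => h (g e).
Definition idc : cantor -> cantor := fun e => e.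
Definition rprod (l : seq (cantor -> cantor)) : cantor -> cantor := foldl rmul idc l.

Definition xmap (f : cantor) : cantor :=
  if f 0%N then capp [:: true; true] (cdrop 1 f)
  else if f 1%N then capp [:: true; false] (cdrop 2 f)
  else capp [:: false] (cdrop 2 f).

Definition xs (w : seq bool) (f : cantor) : cantor :=
  if prefixb w f then capp w (xmap (cdrop (size w) f)) else f.

Definition pn (n : nat) (f : cantor) : cantor :=
  let k := find (fun i => ~~ f i) (iota 0 n.+1) in
  if (k < n)%N then capp (rcons (nseq k.+1 true) false) (cdrop k.+1 f)
  else if k == n then capp (nseq n.+1 true) (cdrop n.+1 f)
  else capp [:: false] (cdrop n.+1 f).

CoInductive stream := SCons : bool -> stream -> stream.

CoFixpoint ycof (s : stream) : stream :=
  match s with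
  | SCons false (SCons false t) => SCons false (ycof t)
  | SCons false (SCons true t) => SCons true (SCons false (yicof t))
  | SCons true t => SCons true (SCons true (ycof t))
  end
with yicof (s : stream) : stream :=
  match s with
  | SCons false t => SCons false (SCons false (yicof t))
  | SCons true (SCons false t) => SCons false (SCons true (ycof t))
  | SCons true (SCons true t) => SCons true (yicof t)
  end.

CoFixpoint of_fun (f : cantor) : stream := SCons (f 0%N) (of_fun (fun n => f n.+1)).

Fixpoint snth (n : nat) (s : stream) : bool :=
  match s with SCons b t => match n with 0 => b | k.+1 => snth k t end end.

Definition ymap (f : cantor) : cantor := fun n => snth n (ycof (of_fun f)).
Definition yimap (f : cantor) : cantor := fun n => snth n (yicof (of_fun f)).

Definition ys (w : seq bool) (f : cantor) : cantor :=
  if prefixb w f then capp w (ymap (cdrop (size w) f)) else f.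
Definition yis (w : seq bool) (f : cantor) : cantor :=
  if prefixb w f then capp w (yimap (cdrop (size w) f)) else f.

Definition ypow (w : seq bool) (k : int) : cantor -> cantor :=
  match k with
  | Posz n => rprod (nseq n (ys w))
  | Negz n => rprod (nseq n.+1 (yis w))
  end.

Inductive gen (A : (cantor -> cantor) -> Prop) : (cantor -> cantor) -> Prop :=
| gen_id : gen A idc
| gen_gen g : A g -> gen A g
| gen_inv g h : A g -> (forall e, h (g e) = e) -> (forall e, g (h e) = e) -> gen A h
| gen_mul g h : gen A g -> gen A h -> gen A (rmul g h).

Definition Tgen (g : cantor -> cantor) : Prop :=
  (exists w, g = xs w) \/ (exists n, g = pn n).
Definition Tgrp := gen Tgen.
Definition Sgrp :=
  gen (fun g => Tgrp g \/ g = rmul (ys [:: true; false]) (yis [:: true; true; false])).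

Definition ones0 (k : nat) : seq bool := rcons (nseq k true) false.

From mathcomp Require Import all_boot all_order all_algebra.
Import GRing.Theory Num.Theory.
From Stdlib Require Import FunctionalExtensionality.

(* Write c_j = y_{1^j 0} y_{1^{j+1} 0}^{-1}.  The extra generator of S is c_1.
   1. The maps y_{1^j 0} act on disjoint cones, so they commute pairwise, and
      y, y^{-1} are mutually inverse; hence each y_w is an invertible map of the
      Cantor set and its integer powers behave as in a group.
   2. If a, b are commuting invertible maps with a b^{-1}, b a^{-1} in a group G,
      then a^t b^{-t} lies in G for every t ∈ Z.
   3. Conjugating by x sends the cone 1w onto the cone 11w, so
      x^{-1} c_j x = c_{j+1}; by induction c_j and c_j^{-1} lie in S for j >= 1,
      and by step 2, y_{1^{j+1}0}^t y_{1^{j+2}0}^{-t} ∈ S.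
   4. Telescoping: the product of the statement equals
      (y_{1^{m+1}0}^{s_1} y_{1^{m+2}0}^{-s_1}) times a product of the same shape of
      length n-1 (for m+1 and the exponents s_1+s_2, s_3, ..., s_n), and the theorem
      follows by induction on n. *)

Definition ctl (f : cantor) : cantor := fun i => f i.+1.
Definition ccons (b : bool) (g : cantor) : cantor :=
  fun i => if i is k.+1 then g k else b.

Lemma ccons_eta (f : cantor) : ccons (f 0) (ctl f) = f.
Proof. by apply: functional_extensionality => -[|i]. Qed.

Lemma ccons_eta2 (f : cantor) : ccons (f 0) (ccons (f 1) (ctl (ctl f))) = f.
Proof. by apply: functional_extensionality => -[|[|i]]. Qed.

Lemma capp_nil (g : cantor) : capp [::] g = g.
Proof. by apply: functional_extensionality => i; rewrite /capp /= subn0. Qed.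

Lemma capp_cons (b : bool) (w : seq bool) (g : cantor) :
  capp (b :: w) g = ccons b (capp w g).
Proof.
by apply: functional_extensionality => -[|i] //; rewrite /capp /= ltnS subSS.
Qed.

Lemma cdrop0 (f : cantor) : cdrop 0 f = f.
Proof. by apply: functional_extensionality => i; rewrite /cdrop addn0. Qed.

Lemma cdropS (k : nat) (f : cantor) : cdrop k.+1 f = cdrop k (ctl f).
Proof. by apply: functional_extensionality => i; rewrite /cdrop /ctl addnS. Qed.

Lemma prefixb_cons (b : bool) (w : seq bool) (f : cantor) :
  prefixb (b :: w) f = (f 0 == b) && prefixb w (ctl f).
Proof.
rewrite /prefixb /=; congr andb.
by rewrite (iotaDl 1 0) all_map; apply: eq_all => i /=; rewrite add1n.
Qed.

Lemma prefixb_capp (w : seq bool) (g : cantor) : prefixb w (capp w g).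
Proof. by elim: w => [|b w IH] //=; rewrite capp_cons prefixb_cons /= eqxx. Qed.

Lemma cdrop_capp (w : seq bool) (g : cantor) : cdrop (size w) (capp w g) = g.
Proof.
by elim: w => [|b w IH] /=; rewrite ?cdrop0 ?capp_nil // capp_cons cdropS.
Qed.

Lemma capp_cdrop (w : seq bool) (f : cantor) :
  prefixb w f -> capp w (cdrop (size w) f) = f.
Proof.
elim: w f => [|b w IH] f /=; first by rewrite cdrop0 capp_nil.
rewrite prefixb_cons => /andP[/eqP <- Hw].
by rewrite capp_cons cdropS IH // ccons_eta.
Qed.

Lemma prefixb_nth (w : seq bool) (f : cantor) (i : nat) :
  prefixb w f -> i < size w -> f i = nth false w i.
Proof. by move=> /allP Hw Hi; apply/eqP; apply: Hw; rewrite mem_iota. Qed.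

(* [cone_map w phi] acts as phi on the cone w{0,1}^N and as the identity
   elsewhere; x_w, y_w and y_w^{-1} are all of this form. *)
Definition cone_map (w : seq bool) (phi : cantor -> cantor) (f : cantor) : cantor :=
  if prefixb w f then capp w (phi (cdrop (size w) f)) else f.

Lemma cone_map_inv (w : seq bool) (phi psi : cantor -> cantor) :
  (forall f, psi (phi f) = f) -> forall f, cone_map w psi (cone_map w phi f) = f.
Proof.
move=> phiK f; rewrite /cone_map; case Hw: (prefixb w f); last by rewrite Hw.
by rewrite prefixb_capp cdrop_capp phiK capp_cdrop.
Qed.

(* Maps supported on disjoint cones commute. *)
Lemma cone_map_comm (w v : seq bool) (phi psi : cantor -> cantor) (i : nat) :
  i < size w -> i < size v -> nth false w i != nth false v i ->
  forall f, cone_map w phi (cone_map v psi f) = cone_map v psi (cone_map w phi f).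
Proof.
move=> Hw Hv Hwv.
have disj f : prefixb w f -> prefixb v f -> False.
  move=> Pw Pv; move: Hwv.
  by rewrite -(prefixb_nth _ _ _ Pw Hw) -(prefixb_nth _ _ _ Pv Hv) eqxx.
move=> f; rewrite /cone_map.
case Pw: (prefixb w f); case Pv: (prefixb v f); rewrite ?Pw ?Pv //.
- by case: (disj f).
- by case Pv': (prefixb v _) => //; case: (disj _ (prefixb_capp _ _) Pv').
- by case Pw': (prefixb w _) => //; case: (disj _ Pw' (prefixb_capp _ _)).
Qed.

(* The cones 1^j0 and 1^{j+1}0 are disjoint (they differ at letter j). *)
Lemma ones0_comm (j : nat) (phi psi : cantor -> cantor) (f : cantor) :
  cone_map (ones0 j) phi (cone_map (ones0 j.+1) psi f) =
  cone_map (ones0 j.+1) psi (cone_map (ones0 j) phi f).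
Proof.
apply: (@cone_map_comm _ _ _ _ j); rewrite /ones0 ?size_rcons ?size_nseq //.
by rewrite !nth_rcons !size_nseq ltnn ltnSn nth_nseq ltnSn eqxx.
Qed.

Lemma of_fun_eq (f : cantor) : of_fun f = SCons (f 0) (of_fun (ctl f)).
Proof.
have unfold (t : stream) : t = match t with SCons b t' => SCons b t' end by case: t.
exact: (unfold (of_fun f)).
Qed.

Lemma ymapE (f : cantor) : ymap f =
  if f 0 then ccons true (ccons true (ymap (ctl f)))
  else if f 1 then ccons true (ccons false (yimap (ctl (ctl f))))
  else ccons false (ymap (ctl (ctl f))).
Proof.
apply: functional_extensionality => i; rewrite {1}/ymap (of_fun_eq f).
case: (f 0); first by case: i => [|[|i]].
rewrite (of_fun_eq (ctl f)); change (ctl f 0) with (f 1).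
by case: (f 1); case: i => [|[|i]].
Qed.

Lemma yimapE (f : cantor) : yimap f =
  if f 0 then
    (if f 1 then ccons true (yimap (ctl (ctl f)))
     else ccons false (ccons true (ymap (ctl (ctl f)))))
  else ccons false (ccons false (yimap (ctl f))).
Proof.
apply: functional_extensionality => i; rewrite {1}/yimap (of_fun_eq f).
case: (f 0); last by case: i => [|[|i]].
rewrite (of_fun_eq (ctl f)); change (ctl f 0) with (f 1).
by case: (f 1); case: i => [|[|i]].
Qed.

Arguments ymap : simpl never.
Arguments yimap : simpl never.

(* y and y^{-1} are mutually inverse, proved letter by letter by strong
   induction on the position, simultaneously for both compositions. *)
Lemma ymap_yimap_nth (k : nat) :
  forall f, yimap (ymap f) k = f k /\ ymap (yimap f) k = f k.
Proof.
elim/ltn_ind: k => k IH f; split.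
- rewrite (ymapE f); case E0: (f 0); last case E1: (f 1); rewrite yimapE /=.
  + by case: k IH => [|k] IH //=; case: (IH k (ltnSn _) (ctl f)).
  + by case: k IH => [|[|k]] IH //=; case: (IH k (ltnW (ltnSn _)) (ctl (ctl f))).
  + by case: k IH => [|[|k]] IH //=; case: (IH k (ltnW (ltnSn _)) (ctl (ctl f))).
- rewrite (yimapE f); case E0: (f 0); first case E1: (f 1); rewrite ymapE /=.
  + by case: k IH => [|[|k]] IH //=; case: (IH k (ltnW (ltnSn _)) (ctl (ctl f))).
  + by case: k IH => [|[|k]] IH //=; case: (IH k (ltnW (ltnSn _)) (ctl (ctl f))).
  + by case: k IH => [|k] IH //=; case: (IH k (ltnSn _) (ctl f)).
Qed.

Lemma ys_cone (w : seq bool) : ys w = cone_map w ymap.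
Proof. by []. Qed.

Lemma yis_cone (w : seq bool) : yis w = cone_map w yimap.
Proof. by []. Qed.

Lemma ysK (w : seq bool) (f : cantor) : yis w (ys w f) = f.
Proof.
apply: (cone_map_inv w ymap) => g.
by apply: functional_extensionality => k; case: (ymap_yimap_nth k g).
Qed.

Lemma yisK (w : seq bool) (f : cantor) : ys w (yis w f) = f.
Proof.
apply: (cone_map_inv w yimap) => g.
by apply: functional_extensionality => k; case: (ymap_yimap_nth k g).
Qed.

Definition ipow (g gi : cantor -> cantor) (t : int) (f : cantor) : cantor :=
  match t with Posz n => iter n g f | Negz n => iter n.+1 gi f end.

Lemma rprod_cons (h : cantor -> cantor) (l : seq (cantor -> cantor)) :
  rprod (h :: l) = rmul h (rprod l).
Proof.
rewrite /rprod /=; elim/last_ind: l => [|l k IH] //.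
by rewrite !foldl_rcons IH.
Qed.

Lemma rprod_nseq (n : nat) (g : cantor -> cantor) (f : cantor) :
  rprod (nseq n g) f = iter n g f.
Proof. by elim: n f => [|n IH] f //=; rewrite rprod_cons /rmul IH -iterSr. Qed.

Lemma ypowE (w : seq bool) (t : int) : ypow w t = ipow (ys w) (yis w) t.
Proof. by apply: functional_extensionality => f; case: t => n; rewrite /ypow rprod_nseq. Qed.

Local Open Scope ring_scope.

Lemma int_step_ind (P : int -> Prop) : P 0 ->
  (forall t, P t -> P (t + 1)) -> (forall t, P t -> P (t - 1)) -> forall t, P t.
Proof.
move=> P0 PS PP; elim/int_ind => [|n|n] // /[dup] _.
- by move=> /PS; rewrite intS addrC.
- by move=> /PP; rewrite intS opprD addrC.
Qed.

Section Powers.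
Variables (g gi : cantor -> cantor).
Hypothesis gK : forall f, gi (g f) = f.
Hypothesis giK : forall f, g (gi f) = f.

Lemma ipowS (t : int) (f : cantor) : ipow g gi (t + 1) f = g (ipow g gi t f).
Proof.
case: t => [n|[|n]]; first by rewrite -PoszD addn1.
  by rewrite /= giK.
have -> : Negz n.+1 + 1 = Negz n by rewrite !NegzE -addn1 PoszD opprD addrK.
by rewrite /= giK.
Qed.

Lemma ipowN1 (t : int) (f : cantor) : ipow g gi (t - 1) f = gi (ipow g gi t f).
Proof.
case: t => [[|n]|n] //.
  have -> : Posz n.+1 - 1 = Posz n by rewrite -addn1 PoszD addrK.
  by rewrite /= gK.
by have -> : Negz n - 1 = Negz n.+1 by rewrite !NegzE -[n.+2]addn1 PoszD opprD.
Qed.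

Lemma ipowD (t u : int) (f : cantor) :
  ipow g gi (t + u) f = ipow g gi u (ipow g gi t f).
Proof.
elim/int_step_ind: u => [|u IH|u IH]; first by rewrite addr0.
  by rewrite addrA !ipowS IH.
by rewrite addrA !ipowN1 IH.
Qed.

Lemma ipow_comm (h : cantor -> cantor) :
  (forall f, h (g f) = g (h f)) -> (forall f, h (gi f) = gi (h f)) ->
  forall t f, h (ipow g gi t f) = ipow g gi t (h f).
Proof.
move=> hg hgi.
have iter_comm k (u : cantor -> cantor) : (forall f, h (u f) = u (h f)) ->
    forall f, h (iter k u f) = iter k u (h f).
  by move=> hu; elim: k => [|k IH] f //=; rewrite hu IH.
by case=> n f; rewrite /ipow iter_comm.
Qed.
End Powers.

Lemma gen_pow_quotient (A : (cantor -> cantor) -> Prop) (a ai b bi : cantor -> cantor) :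
  (forall f, ai (a f) = f) -> (forall f, a (ai f) = f) ->
  (forall f, bi (b f) = f) -> (forall f, b (bi f) = f) ->
  (forall f, a (b f) = b (a f)) -> (forall f, a (bi f) = bi (a f)) ->
  (forall f, ai (b f) = b (ai f)) -> (forall f, ai (bi f) = bi (ai f)) ->
  gen A (rmul a bi) -> gen A (rmul b ai) ->
  forall t, gen A (rmul (ipow a ai t) (ipow b bi (- t))).
Proof.
move=> aK aiK bK biK ab abi aib aibi Gabi Gbai.
elim/int_step_ind => [|t IH|t IH].
- by rewrite oppr0 (_ : rmul _ _ = idc) //; constructor.
- rewrite (_ : rmul _ _ = rmul (rmul (ipow a ai t) (ipow b bi (- t))) (rmul a bi)).
    exact: gen_mul.
  apply: functional_extensionality => f; rewrite /rmul opprD.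
  by rewrite (ipowN1 _ _ bK) (ipowS _ _ aiK) (ipow_comm _ _ _ ab abi).
- rewrite (_ : rmul _ _ = rmul (rmul (ipow a ai t) (ipow b bi (- t))) (rmul b ai)).
    exact: gen_mul.
  apply: functional_extensionality => f; rewrite /rmul opprB addrC.
  by rewrite (ipowS _ _ biK) (ipowN1 _ _ aK) -(ipow_comm _ _ _ aib aibi) aib.
Qed.

Local Close Scope ring_scope.

Definition xinv (f : cantor) : cantor :=
  if f 0 then
    (if f 1 then ccons true (ctl (ctl f)) else ccons false (ccons true (ctl (ctl f))))
  else ccons false (ccons false (ctl f)).

Lemma xsE (f : cantor) : xs [::] f =
  if f 0 then ccons true (ccons true (ctl f))
  else if f 1 then ccons true (ccons false (ctl (ctl f)))
  else ccons false (ctl (ctl f)).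
Proof.
rewrite /xs /= capp_nil cdrop0 /xmap.
by case: (f 0); [|case: (f 1)]; rewrite !capp_cons capp_nil ?cdropS cdrop0.
Qed.

Lemma xK (f : cantor) : xs [::] (xinv f) = f.
Proof.
rewrite -(ccons_eta2 f); move: (f 0) (f 1) (ctl (ctl f)) => a b g.
by case: a; case: b; rewrite /xinv /= xsE.
Qed.

Lemma xinvK (f : cantor) : xinv (xs [::] f) = f.
Proof.
rewrite -(ccons_eta2 f); move: (f 0) (f 1) (ctl (ctl f)) => a b g.
by case: a; case: b; rewrite xsE /xinv /=.
Qed.

Lemma x_conj_cone (w : seq bool) (phi : cantor -> cantor) (f : cantor) :
  xs [::] (cone_map (true :: w) phi (xinv f)) = cone_map (true :: true :: w) phi f.
Proof.
rewrite -(ccons_eta2 f); move: (f 0) (f 1) (ctl (ctl f)) => a b g.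
case: a; last by rewrite /xinv /= /cone_map ?prefixb_cons /= xsE.
case: b; last by rewrite /xinv /= /cone_map ?prefixb_cons /= xsE.
rewrite /xinv /= /cone_map !prefixb_cons /=.
case: (prefixb w g); last by rewrite xsE.
by rewrite xsE /= !capp_cons !cdropS.
Qed.

(* y_u y_v^{-1}; the extra generator of S is ycomm (ones0 1) (ones0 2). *)
Definition ycomm (u v : seq bool) : cantor -> cantor := rmul (ys u) (yis v).

Lemma Sgrp_x : Sgrp (xs [::]).
Proof. by apply: gen_gen; left; apply: gen_gen; left; exists [::]. Qed.

Lemma Sgrp_xinv : Sgrp xinv.
Proof.
apply: (gen_inv (g := xs [::])); [|exact: xinvK|exact: xK].
by left; apply: gen_gen; left; exists [::].
Qed.

(* Conjugating by x shifts both cones one level deeper. *)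
Lemma Sgrp_ycomm_shift (u v : seq bool) :
  Sgrp (ycomm (true :: u) (true :: v)) -> Sgrp (ycomm (true :: true :: u) (true :: true :: v)).
Proof.
move=> /(gen_mul Sgrp_xinv) /gen_mul /(_ Sgrp_x).
congr Sgrp; apply: functional_extensionality => f.
by rewrite /ycomm /rmul !ys_cone !yis_cone -(x_conj_cone u ymap) -(x_conj_cone v yimap) xinvK.
Qed.

Lemma Sgrp_ycomm (j : nat) :
  Sgrp (ycomm (ones0 j.+1) (ones0 j.+2)) /\ Sgrp (ycomm (ones0 j.+2) (ones0 j.+1)).
Proof.
elim: j => [|j [IH1 IH2]]; last by split; apply: Sgrp_ycomm_shift.
have c1K f : ycomm (ones0 2) (ones0 1) (ycomm (ones0 1) (ones0 2) f) = f.
  by rewrite /ycomm /rmul yisK ysK.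
have c1iK f : ycomm (ones0 1) (ones0 2) (ycomm (ones0 2) (ones0 1) f) = f.
  by rewrite /ycomm /rmul yisK ysK.
have c1_gen : (Tgrp (ycomm (ones0 1) (ones0 2)) \/
  ycomm (ones0 1) (ones0 2) = rmul (ys [:: true; false]) (yis [:: true; true; false])).
  by right.
by split; [exact: gen_gen | exact: (gen_inv c1_gen c1K c1iK)].
Qed.

Lemma Sgrp_ypow_pair (j : nat) (t : int) :
  Sgrp (rmul (ypow (ones0 j.+1) t) (ypow (ones0 j.+2) (- t)%R)).
Proof.
have [Hc Hci] := Sgrp_ycomm j.
by rewrite !ypowE; apply: gen_pow_quotient => // f;
  first [exact: ysK | exact: yisK | exact: ones0_comm].
Qed.

Definition merge12 (s : nat -> int) (i : nat) : int :=
  if i == 1 then (s 1 + s 2)%R else s i.+1.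

Lemma sum_merge12 (n : nat) (s : nat -> int) :
  (\sum_(1 <= i < n.+2) merge12 s i = \sum_(1 <= i < n.+3) s i)%R.
Proof.
rewrite big_nat_recl // [RHS]big_nat_recl // [in RHS]big_nat_recl //.
rewrite /merge12 /= GRing.addrA; congr (_ + _)%R.
by apply: eq_big_nat => i /andP[Hi _]; rewrite eqSS; case: i Hi.
Qed.

Lemma ypow_product_merge (m n : nat) (s : nat -> int) :
  rprod [seq ypow (ones0 (m + i)) (s i) | i <- iota 1 n.+2] =
  rmul (rmul (ypow (ones0 m.+1) (s 1)) (ypow (ones0 m.+2) (- s 1)%R))
       (rprod [seq ypow (ones0 (m.+1 + i)) (merge12 s i) | i <- iota 1 n.+1]).
Proof.
have tail : [seq ypow (ones0 (m.+1 + i)) (merge12 s i) | i <- iota 2 n] =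
            [seq ypow (ones0 (m + i)) (s i) | i <- iota 3 n].
  rewrite (iotaDl 1 2) -map_comp; apply/eq_in_map => i; rewrite mem_iota.
  by case: i => [|[|i]] //= _; rewrite addSnnS.
rewrite /= tail !rprod_cons; apply: functional_extensionality => f.
rewrite /rmul !ypowE /merge12 /= !addn1 addn2.
by rewrite -(ipowD _ _ (ysK _) (yisK _)) GRing.addKr.
Qed.

(* The theorem, without the (unneeded) hypothesis n >= 1. *)
Lemma Sgrp_ypow_product (n m : nat) (s : nat -> int) :
  (\sum_(1 <= i < n.+1) s i)%R = 0%R ->
  Sgrp (rprod [seq ypow (ones0 (m + i)) (s i) | i <- iota 1 n]).
Proof.
elim: n m s => [|[|n] IH] m s Hs; first exact: gen_id.
- rewrite big_nat1 in Hs.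
  rewrite /= rprod_cons Hs (_ : rmul _ _ = idc); first exact: gen_id.
  by apply: functional_extensionality => f; rewrite /rmul ypowE.
- rewrite ypow_product_merge; apply: gen_mul; first exact: Sgrp_ypow_pair.
  by apply: IH; rewrite sum_merge12.
Qed.

Theorem lemma6p8 (m n : nat) (s : nat -> int) :
  (1 <= n)%N -> (\sum_(1 <= i < n.+1) s i)%R = 0%R ->
  Sgrp (rprod [seq ypow (ones0 (m + i)) (s i) | i <- iota 1 n]).
Proof. by move=> _; apply: Sgrp_ypow_product. Qed.
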